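(* Every triangle-free unit disk graph has a proper vertex coloring with at most $4$ colors.
   Context: A graph $G$ is a unit disk graph if its vertices can be put in one-to-one correspondence with closed disks of radius $1$ in the plane so that two vertices are adjacent if and only if the corresponding disks intersect (tangent disks are considered to intersect). A graph is triangle-free if it has no subgraph isomorphic to $K_3$. *)

From mathcomp Require Import all_boot all_order all_algebra.
From mathcomp Require Import reals.
Set Implicit Arguments. Unset Strict Implicit. Unset Printing Implicit Defensive.
Import Order.TTheory GRing.Theory Num.Theory.
Local Open Scope ring_scope.

Definition simple_graph (T : finType) (e : rel T) : Prop :=
  symmetric e /\ irreflexive e.

(* Closed disks of radius 1 centred at p and q intersect (tangency counts)
   iff the Euclidean distance of the centres is at most 2, i.e. the squared
   distance is at most 4. *)
Definition unit_disks_meet (R : realType) (p q : R * R) : bool :=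
  (p.1 - q.1) ^+ 2 + (p.2 - q.2) ^+ 2 <= 4%:R.

(* e is a unit disk graph: vertices are in one-to-one correspondence with
   unit disks (given by injective centres), and two distinct vertices are
   adjacent iff their disks intersect. *)
Definition unit_disk_graph (R : realType) (T : finType) (e : rel T) : Prop :=
  exists c : T -> R * R, injective c /\
    forall x y : T, x != y -> (e x y = unit_disks_meet (c x) (c y)).

Definition triangle_free (T : finType) (e : rel T) : Prop :=
  forall x y z : T, ~ [/\ e x y, e y z & e x z].

Definition k_colorable (T : finType) (e : rel T) (k : nat) : Prop :=
  exists col : T -> 'I_k, forall x y : T, e x y -> col x != col y.

From mathcomp Require Import all_boot all_order all_algebra.
From mathcomp Require Import reals.
From mathcomp Require Import lra ring.
Set Implicit Arguments. Unset Strict Implicit. Unset Printing Implicit Defensive.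
Import Order.TTheory GRing.Theory Num.Theory.

(* Let v be the vertex whose disk centre is leftmost.  All neighbours of v
   have centres in the closed right half-disk of radius 2 around c v, which
   splits into three 60-degree sectors.  Two points of one sector are at
   distance at most 2, so two neighbours of v in the same sector would form a
   triangle with v.  Hence v has at most 3 neighbours, the same holds in every
   induced subgraph, and greedy colouring uses at most 4 colours. *)

Section Sextants.
Variable R : realDomainType.
Local Open Scope ring_scope.

(* The angle between (x, y) and (x', y') is at most 60 degrees, i.e. its cosine
   is at least 1/2, written without square roots via dot and cross products. *)
Definition within60 (x y x' y' : R) : Prop :=
  0 <= x * x' + y * y' /\ (x * y' - y * x') ^+ 2 <= 3 * (x * x' + y * y') ^+ 2.

Lemma sqrrB_le (a b c : R) :
  0 <= a -> 0 <= b -> a ^+ 2 <= c -> b ^+ 2 <= c -> (a - b) ^+ 2 <= c.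
Proof. by move=> a0 b0 ha hb; case: (lerP a b) => ?; nra. Qed.

Lemma within60_central (x y x' y' : R) : 0 <= x -> 0 <= x' ->
  3 * y ^+ 2 <= x ^+ 2 -> 3 * y' ^+ 2 <= x' ^+ 2 -> within60 x y x' y'.
Proof.
(* |y y'| <= x x' / 3, so the dot product is at least 2/3 x x' while the
   squared cross product is at most 4/3 (x x')^2. *)
move=> x0 x'0 h h'; set p := x * x'.
have p0 : 0 <= p by exact: mulr_ge0.
have hyy' : (3 * (y * y')) ^+ 2 <= p ^+ 2.
  have -> : (3 * (y * y')) ^+ 2 = (3 * y ^+ 2) * (3 * y' ^+ 2) by ring.
  by rewrite /p exprMn; apply: ler_pM => //; rewrite mulr_ge0 ?sqr_ge0.
have [lo hi] : - p <= 3 * (y * y') /\ 3 * (y * y') <= p.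
  apply/andP; rewrite -ler_norml -(ger0_norm p0).
  by rewrite -ler_sqr ?nnegrE ?normr_ge0 ?real_normK ?num_real.
have cross : (x * y' - y * x') ^+ 2 <= 2 * (x * y') ^+ 2 + 2 * (y * x') ^+ 2.
  have -> : 2 * (x * y') ^+ 2 + 2 * (y * x') ^+ 2 =
    (x * y' - y * x') ^+ 2 + (x * y' + y * x') ^+ 2 by ring.
  by rewrite lerDl sqr_ge0.
have hxy' : 3 * (x * y') ^+ 2 <= p ^+ 2.
  by rewrite /p !exprMn mulrCA ler_wpM2l ?sqr_ge0.
have hyx' : 3 * (y * x') ^+ 2 <= p ^+ 2.
  by rewrite /p !exprMn mulrA ler_wpM2r ?sqr_ge0.
have dot : 2 * p <= 3 * (x * x' + y * y') by rewrite -/p; lra.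
have dot2 : 4 * p ^+ 2 <= 9 * (x * x' + y * y') ^+ 2 by nra.
split; lra.
Qed.

Lemma within60_upper (x y x' y' : R) : 0 <= x -> 0 <= y -> 0 <= x' -> 0 <= y' ->
  x ^+ 2 <= 3 * y ^+ 2 -> x' ^+ 2 <= 3 * y' ^+ 2 -> within60 x y x' y'.
Proof.
move=> x0 y0 x'0 y'0 h h'.
have dot_ge : (y * y') ^+ 2 <= (x * x' + y * y') ^+ 2.
  by rewrite ler_sqr ?nnegrE; nra.
split; first nra.
by apply: sqrrB_le; nra.
Qed.

Lemma within60N (x y x' y' : R) : within60 x y x' y' <-> within60 x (- y) x' (- y').
Proof.
rewrite /within60 !mulrNN.
have -> : x * - y' - - y * x' = - (x * y' - y * x') by ring.
by rewrite sqrrN.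
Qed.

(* The three 60-degree sectors of the closed right half-plane: 0 for angles in
   [-30, 30], 1 for (30, 90] and 2 for [-90, -30). *)
Definition sextant (x y : R) : 'I_3 :=
  if 3 * y ^+ 2 <= x ^+ 2 then 0 else if 0 <= y then 1 else 2.

Lemma within60_same_sextant (x y x' y' : R) : 0 <= x -> 0 <= x' ->
  sextant x y = sextant x' y' -> within60 x y x' y'.
Proof.
rewrite /sextant => x0 x'0.
case: (lerP (3 * y ^+ 2) (x ^+ 2)) => h; case: (lerP (3 * y' ^+ 2) (x' ^+ 2)) => h';
  case: (lerP 0 y) => y0; case: (lerP 0 y') => y'0 // _; try exact: within60_central.
- exact: within60_upper (ltW h) (ltW h').
- by apply/within60N/within60_upper; rewrite ?sqrrN ?oppr_ge0 //; apply: ltW.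
Qed.

Lemma sqrdist_le4_within60 (x y x' y' : R) :
  x ^+ 2 + y ^+ 2 <= 4 -> x' ^+ 2 + y' ^+ 2 <= 4 -> within60 x y x' y' ->
  (x - x') ^+ 2 + (y - y') ^+ 2 <= 4.
Proof.
rewrite /within60; set A := x ^+ 2 + y ^+ 2; set B := x' ^+ 2 + y' ^+ 2.
set d := x * x' + y * y'; set c := x * y' - y * x' => hA hB [d0 hc].
have A0 : 0 <= A by rewrite addr_ge0 ?sqr_ge0.
have B0 : 0 <= B by rewrite addr_ge0 ?sqr_ge0.
have hAB : A * B <= (2 * d) ^+ 2.
  have -> : A * B = d ^+ 2 + c ^+ 2 by rewrite /A /B /d /c; ring.
  by rewrite exprMn; lra.
(* (min A B)^2 <= A B, hence A + B - 2 d <= max A B. *)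
have hmin : Num.min A B <= 2 * d.
  rewrite -ler_sqr ?nnegrE ?le_min ?A0 ?B0 ?mulr_ge0 //; apply: le_trans hAB.
  by rewrite expr2; case: (leP A B) => [|/ltW] ?; [apply: ler_wpM2l | apply: ler_wpM2r].
have -> : (x - x') ^+ 2 + (y - y') ^+ 2 = A + B - 2 * d by rewrite /A /B /d; ring.
by move: hmin; case: (leP A B) => _; lra.
Qed.

End Sextants.

Section UnitDisks.
Variable R : realType.
Local Open Scope ring_scope.

Lemma unit_disks_meet_same_sextant (o p q : R * R) :
  unit_disks_meet o p -> unit_disks_meet o q -> o.1 <= p.1 -> o.1 <= q.1 ->
  sextant (p.1 - o.1) (p.2 - o.2) = sextant (q.1 - o.1) (q.2 - o.2) ->
  unit_disks_meet p q.
Proof.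
have sqrBC (a b : R) : (a - b) ^+ 2 = (b - a) ^+ 2 by rewrite -sqrrN opprB.
rewrite /unit_disks_meet !(sqrBC o.1) !(sqrBC o.2) -!(subr_ge0 o.1) => hp hq p0 q0.
move=> /(within60_same_sextant p0 q0) /(sqrdist_le4_within60 hp hq).
have -> : p.1 - o.1 - (q.1 - o.1) = p.1 - q.1 by ring.
by have -> : p.2 - o.2 - (q.2 - o.2) = p.2 - q.2 by ring.
Qed.

End UnitDisks.

Definition degenerate (T : finType) (e : rel T) (k : nat) : Prop :=
  forall S : {set T}, S != set0 -> exists2 v, v \in S & #|[set w in S | e v w]| <= k.

Section DegenerateColoring.
Variables (T : finType) (e : rel T) (k : nat).
Hypotheses (e_simple : simple_graph e) (e_degenerate : degenerate e k).

Lemma degenerate_colorable_on (S : {set T}) :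
  exists col : T -> 'I_k.+1, {in S &, forall x y, e x y -> col x != col y}.
Proof.
have [e_sym e_irr] := e_simple.
move: {2}#|S| (leqnn #|S|) => n; elim: n S => [|n IH] S leSn.
  by exists (fun=> ord0) => x y; move: leSn; rewrite leqn0 cards_eq0 => /eqP ->; rewrite inE.
have [-> | /e_degenerate [v vS degv]] := eqVneq S set0.
  by exists (fun=> ord0) => x y; rewrite inE.
have [col colP] : exists col : T -> 'I_k.+1,
    {in S :\ v &, forall x y, e x y -> col x != col y}.
  by apply: IH; move: leSn; rewrite (cardsD1 v S) vS.
set N := [set w in S | e v w].
have [i iN] : exists i, i \notin col @: N.
  have : 0 < #|~: (col @: N)|.
    by rewrite cardsCs setCK card_ord subn_gt0 ltnS (leq_trans (leq_imset_card _ _)).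
  by case/card_gt0P => i; rewrite inE; exists i.
have colN w : w \in S -> e v w -> col w \in col @: N.
  by move=> wS evw; rewrite imset_f // inE wS.
exists (fun x => if x == v then i else col x) => x y xS yS.
case: (eqVneq x v) => [-> | xv]; case: (eqVneq y v) => [-> | yv].
- by rewrite e_irr.
- by move=> evy; apply: contraNneq iN => ->; apply: colN.
- by rewrite e_sym => evx; apply: contraNneq iN => <-; apply: colN.
- by apply: colP; rewrite !inE ?xv ?yv.
Qed.

Lemma degenerate_colorable : k_colorable e k.+1.
Proof.
have [col colP] := degenerate_colorable_on [set: T].
by exists col => x y; apply: colP; rewrite inE.
Qed.

End DegenerateColoring.

Lemma udg_triangle_free_degenerate (R : realType) (T : finType) (e : rel T) :
  unit_disk_graph R e -> triangle_free e -> degenerate e 3.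
Proof.
move=> [c [_ ce]] tri S /set0Pn [v0 v0S].
have meet x y : e x y -> unit_disks_meet (c x) (c y).
  case: (eqVneq x y) => [-> _ | /ce -> //].
  by rewrite /unit_disks_meet !subrr expr0n addr0 ler0n.
case: (arg_minP (fun v => (c v).1) v0S) => v vS vmin; exists v => //.
rewrite -[3]card_ord; apply: (@leq_card_in _ _
  (fun w => sextant ((c w).1 - (c v).1) ((c w).2 - (c v).2))).
move=> w w'; rewrite !inE => /andP[wS evw] /andP[w'S evw'] same.
have [// | ww'] := eqVneq w w'; exfalso; apply: (tri v w w'); split => //.
rewrite ce //; apply: (@unit_disks_meet_same_sextant _ (c v)) => //;
  by [apply: meet | apply: vmin].
Qed.

Theorem lemma4p1 (R : realType) (T : finType) (e : rel T) :
  simple_graph e -> unit_disk_graph R e -> triangle_free e ->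
  k_colorable e 4.
Proof.
move=> simple udg tri; apply: degenerate_colorable simple _.
exact: udg_triangle_free_degenerate udg tri.
Qed.
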